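(* Let $\{\varphi_n\},\{\psi_n\}$ be biorthogonal sequences in a Hilbert space $\mathcal H$ and $\mathcal D,\mathcal E$ dense subspaces with $D_\psi\subseteq\mathcal D\subseteq D(\varphi)$, $D_\varphi\subseteq\mathcal E\subseteq D(\psi)$, such that $(\{\varphi_n\},\{\psi_n\})$ is a $(\mathcal D,\mathcal E)$-quasi basis. Then: (1) $D_\varphi^\perp\subseteq D(\varphi)$, where $D_\varphi^\perp$ is the orthogonal complement of $D_\varphi$; (2) if $\mathcal D\cap D_\varphi^\perp$ is dense in $D_\varphi^\perp$, then $D_\varphi$ is dense in $\mathcal H$. Similarly, $D_\psi^\perp\subseteq D(\psi)$, and if $\mathcal E\cap D_\psi^\perp$ is dense in $D_\psi^\perp$, then $D_\psi$ is dense in $\mathcal H$.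
   Context: Inner product linear in the first argument. Biorthogonal: $\langle\varphi_n,\psi_m\rangle=\delta_{nm}$. $D_\varphi,D_\psi$ are the linear spans of $\{\varphi_n\},\{\psi_n\}$; $D(\varphi)=\{x:\sum_n|\langle x,\varphi_n\rangle|^2<\infty\}$, similarly $D(\psi)$. The pair is a $(\mathcal D,\mathcal E)$-quasi basis if $\sum_k\langle x,\varphi_k\rangle\langle\psi_k,y\rangle=\langle x,y\rangle$ for all $x\in\mathcal D$, $y\in\mathcal E$. *)

From mathcomp Require Import all_boot all_order all_algebra.
From mathcomp Require Import reals complex.
Set Implicit Arguments.
Unset Strict Implicit.
Unset Printing Implicit Defensive.
Import Order.TTheory GRing.Theory Num.Theory.
Local Open Scope ring_scope.
Local Open Scope complex_scope.

Section HilbertDefs.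
Variables (R : realType) (H : lmodType R[i]) (ip : H -> H -> R[i]).

Definition cmod (z : R[i]) : R := Normc.normc z.

Definition inner_product : Prop :=
  [/\ forall (a : R[i]) (x y z : H), ip (a *: x + y) z = a * ip x z + ip y z,
      forall x y : H, ip y x = (ip x y)^*,
      forall x : H, 0 <= ip x x
    & forall x : H, ip x x = 0 -> x = 0].

Definition hnorm (x : H) : R := Num.sqrt (complex.Re (ip x x)).

Definition hcomplete : Prop :=
  forall u : nat -> H,
    (forall e : R, 0 < e -> exists N, forall m n, (N <= m)%N -> (N <= n)%N ->
        hnorm (u m - u n) < e) ->
    exists l : H, forall e : R, 0 < e -> exists N, forall n, (N <= n)%N ->
        hnorm (u n - l) < e.

Definition hilbert_space : Prop := inner_product /\ hcomplete.

Definition subspace (D : H -> Prop) : Prop :=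
  D 0 /\ forall (a : R[i]) (x y : H), D x -> D y -> D (a *: x + y).

Definition dense_in (A S : H -> Prop) : Prop :=
  forall x, S x -> forall e : R, 0 < e -> exists y, A y /\ hnorm (x - y) < e.

Definition dense (A : H -> Prop) : Prop := dense_in A (fun _ => True).

Definition lspan (phi : nat -> H) (x : H) : Prop :=
  exists (s : seq nat) (c : nat -> R[i]), x = \sum_(k <- s) c k *: phi k.

Definition perp (S : H -> Prop) (x : H) : Prop :=
  forall y, S y -> ip y x = 0.

(* D(phi) = { x : sum_n |<x, phi_n>|^2 < oo } *)
Definition Ddom (phi : nat -> H) (x : H) : Prop :=
  exists M : R, forall N : nat,
    \sum_(k < N) cmod (ip x (phi k)) ^+ 2 <= M.

Definition biorthogonal (phi psi : nat -> H) : Prop :=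
  forall n m : nat, ip (phi n) (psi m) = if n == m then 1 else 0.

(* (D,E)-quasi basis: sum_k <x,phi_k><psi_k,y> = <x,y> for x in D, y in E *)
Definition quasi_basis (phi psi : nat -> H) (D E : H -> Prop) : Prop :=
  forall x y, D x -> E y ->
    forall e : R, 0 < e -> exists N0, forall N, (N0 <= N)%N ->
      cmod (\sum_(k < N) ip x (phi k) * ip (psi k) y - ip x y) < e.

End HilbertDefs.

From mathcomp Require Import all_boot all_order all_algebra.
From mathcomp Require boolp classical_sets.
From mathcomp Require Import reals complex ring lra.
Set Implicit Arguments. Unset Strict Implicit. Unset Printing Implicit Defensive.
Import Order.TTheory GRing.Theory Num.Theory.
Local Open Scope ring_scope.
Local Open Scope complex_scope.

(* If v ∈ D is orthogonal to every φ_n, each term of the quasi-basis expansion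
   ⟨v, y⟩ = Σ_k ⟨v, φ_k⟩⟨ψ_k, y⟩ vanishes, so v ⊥ E and v = 0 since E is dense.
   Thus D ∩ D_φ^⊥ = {0}, and its density in D_φ^⊥ forces D_φ^⊥ = {0}.  A subspace
   S with trivial orthogonal complement is dense: a minimizing sequence for the
   distance from z to S is Cauchy by the parallelogram law, its limit l is a
   point of the closure of S nearest to z, hence z - l ⊥ S and z = l. *)

Lemma quadratic_ge0_disc (R : realFieldType) (a b c : R) :
  0 <= c -> (forall t, 0 <= a - 2 * t * b + t ^+ 2 * c) -> b ^+ 2 <= a * c.
Proof.
move=> c_ge0; have [c_gt0 ge0_t | c_le0] := ltP 0 c.
  have := ge0_t (b / c).
  have -> : a - 2 * (b / c) * b + (b / c) ^+ 2 * c = (a * c - b ^+ 2) / c.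
    by field; rewrite gt_eqF.
  by rewrite pmulr_lge0 ?invr_gt0 // subr_ge0.
have -> : c = 0 by apply/eqP; rewrite eq_le c_le0.
rewrite mulr0 => ge0_t; have [-> | b_neq0] := eqVneq b 0; first by rewrite expr0n.
have := ge0_t ((a + 1) / (2 * b)); rewrite mulr0 addr0.
have -> : 2 * ((a + 1) / (2 * b)) * b = a + 1 by field.
lra.
Qed.

Lemma inv_succ_lt_eventually (R : realType) (e : R) :
  0 < e -> exists k, forall n, (k <= n)%N -> n.+1%:R^-1 < e.
Proof.
move=> e_gt0; have [k] := ltr_add_invr e_gt0; rewrite add0r => k_lt.
exists k => n kn; apply: le_lt_trans k_lt.
by rewrite lef_pV2 ?posrE ?ltr0Sn // ler_nat ltnS.
Qed.

Lemma cmod_small_eq0 (R : realType) (z : R[i]) :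
  (forall e, 0 < e -> cmod z < e) -> z = 0.
Proof.
move=> small; apply: Normc.eq0_normc; apply/eqP; rewrite eq_le.
have -> : 0 <= Normc.normc z by case: (z) => a b; exact: sqrtr_ge0.
rewrite andbT; apply/ler_addgt0Pr => e e_gt0; rewrite add0r ltW //.
exact: small.
Qed.

Section InnerProduct.
Variables (R : realType) (H : lmodType R[i]) (ip : H -> H -> R[i]).
Hypothesis ip_inner : inner_product ip.
Local Notation hn := (hnorm ip).

Definition ipr (x y : H) : R := complex.Re (ip x y).

Lemma ip_conj x y : ip y x = (ip x y)^*.
Proof. by case: ip_inner. Qed.

Lemma ip_eq0C x y : ip x y = 0 -> ip y x = 0.
Proof.
by rewrite (ip_conj x y) => ->; apply/eqP; rewrite eq_complex /= oppr0 !eqxx.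
Qed.

Lemma ip0l z : ip 0 z = 0.
Proof.
case: ip_inner => lin _ _ _; have := lin 1 0 0 z.
by rewrite scale1r addr0 mul1r => /eqP; rewrite -subr_eq addrN eq_sym => /eqP.
Qed.

Lemma ipZl a x z : ip (a *: x) z = a * ip x z.
Proof. by case: ip_inner => lin _ _ _; rewrite -[a *: x]addr0 lin ip0l addr0. Qed.

Lemma ipDl x y z : ip (x + y) z = ip x z + ip y z.
Proof. by case: ip_inner => lin _ _ _; rewrite -[x]scale1r lin mul1r scale1r. Qed.

Lemma iprC x y : ipr x y = ipr y x.
Proof. by rewrite /ipr (ip_conj x y); case: (ip x y). Qed.

Lemma iprDl x y z : ipr (x + y) z = ipr x z + ipr y z.
Proof. by rewrite /ipr ipDl; case: (ip x z) => ? ?; case: (ip y z). Qed.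

Lemma iprZl (t : R) x z : ipr (t%:C *: x) z = t * ipr x z.
Proof. by rewrite /ipr ipZl; case: (ip x z) => a b /=; rewrite mul0r subr0. Qed.

Lemma iprNl x z : ipr (- x) z = - ipr x z.
Proof. by rewrite /ipr -scaleN1r ipZl mulN1r; case: (ip x z). Qed.

Lemma iprDr x y z : ipr z (x + y) = ipr z x + ipr z y.
Proof. by rewrite !(iprC z) iprDl. Qed.

Lemma iprZr (t : R) x z : ipr z (t%:C *: x) = t * ipr z x.
Proof. by rewrite !(iprC z) iprZl. Qed.

Lemma iprNr x z : ipr z (- x) = - ipr z x.
Proof. by rewrite !(iprC z) iprNl. Qed.

Lemma ip_self x : ip x x = (ipr x x)%:C.
Proof.
case: ip_inner => _ _ ge0 _; move: (ge0 x); rewrite lecE /ipr.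
by case: (ip x x) => a b /= /andP[/eqP -> _].
Qed.

Lemma ipr_self_ge0 x : 0 <= ipr x x.
Proof. by case: ip_inner => _ _ ge0 _; move: (ge0 x); rewrite lecE => /andP[]. Qed.

Lemma hnorm_ge0 x : 0 <= hn x.
Proof. exact: sqrtr_ge0. Qed.

Lemma hnorm_sqr x : hn x ^+ 2 = ipr x x.
Proof. by rewrite sqr_sqrtr // ipr_self_ge0. Qed.

Lemma hnorm_eq0 x : hn x = 0 -> x = 0.
Proof.
move=> /(congr1 (fun r => r ^+ 2)); rewrite hnorm_sqr expr0n => /= x0.
by case: ip_inner => _ _ _; apply; rewrite ip_self x0.
Qed.

Lemma hnorm_small_eq0 x : (forall e, 0 < e -> hn x < e) -> x = 0.
Proof.
move=> small; apply: hnorm_eq0; apply/eqP; rewrite eq_le hnorm_ge0 andbT.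
by apply/ler_addgt0Pr => e e_gt0; rewrite add0r ltW ?small.
Qed.

Lemma hnormZ (t : R) x : hn (t%:C *: x) = `|t| * hn x.
Proof.
by rewrite /hnorm -/(ipr _ _) iprZl iprZr mulrA -expr2 sqrtrM ?sqr_ge0 ?sqrtr_sqr.
Qed.

Lemma hnormN x : hn (- x) = hn x.
Proof. by rewrite /hnorm -/(ipr _ _) iprNl iprNr opprK. Qed.

Lemma hnormD_sqr x y : hn (x + y) ^+ 2 = hn x ^+ 2 + 2 * ipr x y + hn y ^+ 2.
Proof. by rewrite !hnorm_sqr iprDl !iprDr (iprC y x); ring. Qed.

Lemma parallelogram x y :
  hn (x + y) ^+ 2 + hn (x - y) ^+ 2 = 2 * hn x ^+ 2 + 2 * hn y ^+ 2.
Proof. by rewrite !hnormD_sqr hnormN iprNr; ring. Qed.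

Lemma hnormB_sqr (t : R) x y :
  hn (x - t%:C *: y) ^+ 2 = hn x ^+ 2 - 2 * t * ipr x y + t ^+ 2 * hn y ^+ 2.
Proof.
rewrite hnormD_sqr hnormN hnormZ iprNr iprZr exprMn real_normK ?num_real //.
ring.
Qed.

Lemma cauchy_schwarz x y : ipr x y <= hn x * hn y.
Proof.
have disc : ipr x y ^+ 2 <= (hn x * hn y) ^+ 2.
  rewrite exprMn; apply: quadratic_ge0_disc => [|t]; first exact: sqr_ge0.
  by rewrite -hnormB_sqr sqr_ge0.
apply: le_trans (ler_norm _) _.
by rewrite -(ler_pXn2r (_ : 0 < 2)%N) ?nnegrE ?mulr_ge0 ?hnorm_ge0 // real_normK ?num_real.
Qed.

Lemma hnormD_le x y : hn (x + y) <= hn x + hn y.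
Proof.
rewrite -(ler_pXn2r (_ : 0 < 2)%N) ?nnegrE ?addr_ge0 ?hnorm_ge0 //.
by rewrite hnormD_sqr sqrrD; have := cauchy_schwarz x y; lra.
Qed.

Lemma hnorm_le_orth x y : ipr x y = 0 -> hn x <= hn (x - y).
Proof.
move=> xy0; rewrite -(ler_pXn2r (_ : 0 < 2)%N) ?nnegrE ?hnorm_ge0 //.
by rewrite hnormD_sqr iprNr xy0 hnormN oppr0 mulr0 addr0 lerDl sqr_ge0.
Qed.

Lemma ipr_eq0_of_min x y : (forall t : R, hn x <= hn (x - t%:C *: y)) -> ipr x y = 0.
Proof.
move=> min; apply/eqP; rewrite -sqrf_eq0 eq_le sqr_ge0 andbT.
rewrite -(mul0r (hn y ^+ 2)); apply: quadratic_ge0_disc => [|t]; first exact: sqr_ge0.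
have := min t; rewrite -(ler_pXn2r (_ : 0 < 2)%N) ?nnegrE ?hnorm_ge0 // hnormB_sqr.
lra.
Qed.

Lemma ip_eq0_of_ipr x y : ipr x y = 0 -> ipr ('i *: x) y = 0 -> ip x y = 0.
Proof.
rewrite /ipr ipZl; case: (ip x y) => a b /= a0 b0.
by apply/eqP; rewrite eq_complex /=; apply/andP; split; apply/eqP; lra.
Qed.

End InnerProduct.

Section Density.
Variables (R : realType) (H : lmodType R[i]) (ip : H -> H -> R[i]).
Hypotheses (ip_inner : inner_product ip) (ip_complete : hcomplete ip).
Variable S : H -> Prop.
Hypothesis S_subspace : subspace S.
Local Notation hn := (hnorm ip).

Lemma subspace0 : S 0.
Proof. by case: S_subspace. Qed.

Lemma subspaceZ a x : S x -> S (a *: x).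
Proof. by case: S_subspace => S0 lin Sx; rewrite -[_ *: x]addr0; apply: lin. Qed.

Lemma subspaceD x y : S x -> S y -> S (x + y).
Proof. by case: S_subspace => _ lin Sx Sy; rewrite -[x]scale1r; apply: lin. Qed.

Definition dist z := inf (fun r => exists2 y, S y & r = hn (z - y)).

Let dist_has_inf z :
  classical_sets.has_inf (fun r => exists2 y, S y & r = hn (z - y)).
Proof.
split; first by exists (hn (z - 0)), 0; first exact: subspace0.
by exists 0 => _ [y _ ->]; exact: hnorm_ge0.
Qed.

Lemma dist_le z y : S y -> dist z <= hn (z - y).
Proof. by move=> Sy; apply: ge_inf; [case: (dist_has_inf z) | exists y]. Qed.

Lemma dist_ge0 z : 0 <= dist z.
Proof.
apply: lb_le_inf; first by case: (dist_has_inf z).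
by move=> _ [y _ ->]; exact: hnorm_ge0.
Qed.

Lemma minimizing_seq z :
  exists ys : nat -> H, forall n, S (ys n) /\ hn (z - ys n) < dist z + n.+1%:R^-1.
Proof.
have near n : exists y, S y /\ hn (z - y) < dist z + n.+1%:R^-1.
  have inv_gt0 : 0 < (n.+1%:R : R)^-1 by rewrite invr_gt0 ltr0Sn.
  have [_ [y Sy ->] lt_y] := inf_adherent inv_gt0 (dist_has_inf z).
  by exists y.
by have [ys hys] := boolp.choice near; exists ys.
Qed.

Lemma near_minimizers_close z y y' (p q : R) :
  S y -> S y' -> 0 <= p <= 1 -> 0 <= q <= 1 ->
  hn (z - y) <= dist z + p -> hn (z - y') <= dist z + q ->
  hn (y - y') ^+ 2 <= 4 * (dist z + 1) * (p + q).
Proof.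
move=> Sy Sy' /andP[p_ge0 p_le1] /andP[q_ge0 q_le1] le_y le_y'.
have mid_le : 2 * dist z <= hn ((z - y) + (z - y')).
  have -> : (z - y) + (z - y') = 2%:C *: (z - (2^-1)%:C *: (y + y')).
    have half : (2%:C * (2^-1)%:C : R[i]) = 1.
      apply/eqP; rewrite eq_complex /= !mul0r !mulr0 subr0 addr0.
      by rewrite divff ?pnatr_eq0 ?eqxx.
    have two : (2%:C : R[i]) = 1 + 1 by apply/eqP; rewrite eq_complex /= addr0 !eqxx.
    rewrite scalerBr scalerA half scale1r two scalerDl scale1r.
    by rewrite opprD addrACA.
  rewrite (hnormZ ip_inner) ger0_norm // ler_pM2l // dist_le //.
  by apply: subspaceZ; apply: subspaceD.
have sqr_le (a b : R) : 0 <= a -> a <= b -> a ^+ 2 <= b ^+ 2.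
  by move=> a_ge0 le_ab; rewrite ler_pXn2r ?nnegrE ?(le_trans a_ge0).
have d_ge0 := dist_ge0 z.
have := sqr_le _ _ (hnorm_ge0 ip _) le_y; have := sqr_le _ _ (hnorm_ge0 ip _) le_y'.
have := sqr_le _ _ (mulr_ge0 (ler0n R 2) d_ge0) mid_le.
have := parallelogram ip_inner (z - y) (z - y').
have -> : (z - y) - (z - y') = - (y - y') by rewrite opprB addrC addrA subrK opprB.
rewrite (hnormN ip_inner); nra.
Qed.

Lemma minimizing_seq_cvg z (ys : nat -> H) :
  (forall n, S (ys n) /\ hn (z - ys n) < dist z + n.+1%:R^-1) ->
  exists l, forall e, 0 < e -> exists N, forall n, (N <= n)%N -> hn (ys n - l) < e.
Proof.
move=> hys; apply: ip_complete => e e_gt0.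
have K_gt0 : 0 < 8 * (dist z + 1) by rewrite mulr_gt0 // ltr_wpDl ?dist_ge0.
have [k k_small] := inv_succ_lt_eventually (divr_gt0 (exprn_gt0 2 e_gt0) K_gt0).
exists k => m n km kn.
have inv01 j : 0 <= (j.+1%:R : R)^-1 <= 1.
  by rewrite invr_ge0 ler0n invr_le1 ?ler1n ?unitfE ?pnatr_eq0.
rewrite -(ltr_pXn2r (_ : 0 < 2)%N) ?nnegrE ?hnorm_ge0 ?ltW //.
apply: le_lt_trans (near_minimizers_close (hys m).1 (hys n).1 (inv01 m) (inv01 n)
  (ltW (hys m).2) (ltW (hys n).2)) _.
move: (k_small m km) (k_small n kn); rewrite !ltr_pdivlMr //.
move: (m.+1%:R^-1 : R) (n.+1%:R^-1 : R) => p q; lra.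
Qed.

Lemma closure_nearest z : exists l,
  (forall e, 0 < e -> exists y, S y /\ hn (l - y) < e) /\
  (forall v, S v -> hn (z - l) <= hn (z - l - v)).
Proof.
have [ys hys] := minimizing_seq z; have [l ys_cvg] := minimizing_seq_cvg hys.
have near_l e : 0 < e ->
    exists2 y, S y & hn (z - y) < dist z + e /\ hn (y - l) < e.
  move=> e_gt0; have [k k_small] := inv_succ_lt_eventually e_gt0.
  have [N ltN] := ys_cvg e e_gt0; pose n := maxn k N.
  exists (ys n); first exact: (hys n).1.
  split; last by rewrite ltN ?leq_maxr.
  by apply: lt_le_trans (hys n).2 _; rewrite lerD2l ltW ?k_small ?leq_maxl.
exists l; split.
  move=> e e_gt0; have [y Sy [_ lt_y]] := near_l e e_gt0.
  by exists y; rewrite -opprB (hnormN ip_inner).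
move=> v Sv; apply: (@le_trans _ _ (dist z)); apply/ler_addgt0Pr => e e_gt0;
  have [y Sy [le_y lt_y]] := near_l (e / 2) (divr_gt0 e_gt0 (ltr0Sn R 1)).
  by have := hnormD_le ip_inner (z - y) (y - l); rewrite addrA subrK; lra.
have := dist_le z (subspaceD Sy Sv).
have -> : z - (y + v) = (z - l - v) + (l - y).
  by rewrite [RHS]addrC addrA [l - y + _]addrC addrA subrK opprD addrA.
have := hnormD_le ip_inner (z - l - v) (l - y).
by rewrite -[l - y]opprB (hnormN ip_inner); lra.
Qed.

Lemma perp_of_nearest w : (forall v, S v -> hn w <= hn (w - v)) -> perp ip S w.
Proof.
move=> nearest y Sy.
have orth u : S u -> ipr ip u w = 0.
  move=> Su; rewrite (iprC ip_inner); apply: (ipr_eq0_of_min ip_inner) => t.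
  exact/nearest/subspaceZ.
by apply: (ip_eq0_of_ipr ip_inner); apply: orth; last apply: subspaceZ.
Qed.

Lemma dense_of_perp_eq0 : (forall w, perp ip S w -> w = 0) -> dense ip S.
Proof.
move=> perp_eq0 z _; have [l [l_closure l_nearest]] := closure_nearest z.
have /eqP : z - l = 0 by apply/perp_eq0/perp_of_nearest.
by rewrite subr_eq0 => /eqP ->.
Qed.

End Density.

Section LinearSpan.
Variables (R : realType) (H : lmodType R[i]) (f : nat -> H).

Let ord_span x := exists N (c : nat -> R[i]), x = \sum_(k < N) c k *: f k.

Let ord_span_widen N M (c : nat -> R[i]) : (N <= M)%N ->
  \sum_(k < N) c k *: f k = \sum_(k < M) (if (k < N)%N then c k else 0) *: f k.
Proof.
move=> NM; rewrite (big_ord_widen M (fun k => c k *: f k) NM) big_mkcond /=.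
by apply: eq_bigr => k _; case: ifP => //; rewrite scale0r.
Qed.

Let ord_span_lin a x y : ord_span x -> ord_span y -> ord_span (a *: x + y).
Proof.
move=> [N1 [c1 ->]] [N2 [c2 ->]]; exists (maxn N1 N2).
exists (fun k =>
  a * (if (k < N1)%N then c1 k else 0) + (if (k < N2)%N then c2 k else 0)).
rewrite (ord_span_widen c1 (leq_maxl N1 N2)) (ord_span_widen c2 (leq_maxr N1 N2)).
by rewrite scaler_sumr -big_split; apply: eq_bigr => k _; rewrite scalerDl scalerA.
Qed.

Lemma lspan_mem k : lspan f (f k).
Proof. by exists [:: k], (fun _ => 1); rewrite big_seq1 scale1r. Qed.

Lemma subspace_lspan : subspace (lspan f).
Proof.
have lspan_ord x : lspan f x <-> ord_span x.
  split=> [[s [c ->]] | [N [c ->]]]; last first.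
    exists (iota 0 N), c.
    by rewrite -(big_mkord xpredT (fun k => c k *: f k)) /index_iota subn0.
  elim: s => [|j s IH]; first by exists 0%N, c; rewrite big_nil big_ord0.
  rewrite big_cons; apply: ord_span_lin IH.
  exists j.+1, (fun k => (k == j)%:R).
  rewrite big_ord_recr /= eqxx scale1r big1 ?add0r //.
  by move=> k _; rewrite (ltn_eqF (ltn_ord k)) scale0r.
split; first by apply/lspan_ord; exists 0%N, (fun _ => 0); rewrite big_ord0.
by move=> a x y /lspan_ord Sx /lspan_ord Sy; apply/lspan_ord/ord_span_lin.
Qed.

End LinearSpan.

Section Orthogonality.
Variables (R : realType) (H : lmodType R[i]) (ip : H -> H -> R[i]).
Hypothesis ip_inner : inner_product ip.

Lemma Ddom_perp_lspan f x : perp ip (lspan f) x -> Ddom ip f x.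
Proof.
move=> x_perp; exists 0 => N; rewrite big1 // => k _.
suff -> : cmod (ip x (f k)) = 0 by rewrite expr0n.
rewrite (ip_eq0C ip_inner (x_perp _ (lspan_mem f k))); exact: Normc.normc0.
Qed.

Lemma perp_dense_eq0 A x : dense ip A -> perp ip A x -> x = 0.
Proof.
move=> A_dense x_perp; apply: (hnorm_small_eq0 ip_inner) => e e_gt0.
have [y [Ay lt_y]] := A_dense x I e e_gt0.
apply: le_lt_trans lt_y; apply: (hnorm_le_orth ip_inner).
by rewrite (iprC ip_inner) /ipr x_perp.
Qed.

Lemma eq0_of_dense_in (A P : H -> Prop) :
  dense_in ip (fun x => A x /\ P x) P -> (forall v, A v -> P v -> v = 0) ->
  forall w, P w -> w = 0.
Proof.
move=> AP_dense AP_eq0 w Pw; apply: (hnorm_small_eq0 ip_inner) => e e_gt0.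
have [v [[Av Pv] lt_v]] := AP_dense w Pw e e_gt0.
by rewrite -[w]subr0 -(AP_eq0 v Av Pv).
Qed.

Variables (phi psi : nat -> H) (D E : H -> Prop).
Hypothesis qb : quasi_basis ip phi psi D E.

Lemma quasi_basis_ip_eq0 x y : D x -> E y ->
  (forall k, ip x (phi k) * ip (psi k) y = 0) -> ip x y = 0.
Proof.
move=> Dx Ey terms0; apply: cmod_small_eq0 => e e_gt0.
have [N0 close] := qb Dx Ey e_gt0.
by move: (close N0 (leqnn _)); rewrite big1 // sub0r /cmod normcN.
Qed.

Lemma quasi_basis_perpl v : D v -> perp ip (lspan phi) v -> perp ip E v.
Proof.
move=> Dv v_perp y Ey.
apply/(ip_eq0C ip_inner)/quasi_basis_ip_eq0 => // k.
by rewrite (ip_eq0C ip_inner (v_perp _ (lspan_mem phi k))) mul0r.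
Qed.

Lemma quasi_basis_perpr v : E v -> perp ip (lspan psi) v -> perp ip D v.
Proof.
move=> Ev v_perp y Dy; apply: quasi_basis_ip_eq0 => // k.
by rewrite v_perp ?mulr0 //; apply: lspan_mem.
Qed.

End Orthogonality.

Theorem proposition4p1 (R : realType) (H : lmodType R[i]) (ip : H -> H -> R[i])
  (phi psi : nat -> H) (D E : H -> Prop) :
  hilbert_space ip ->
  biorthogonal ip phi psi ->
  subspace D -> subspace E ->
  dense ip D -> dense ip E ->
  (forall x, lspan phi x -> E x) -> (forall x, E x -> Ddom ip psi x) ->
  (forall x, lspan psi x -> D x) -> (forall x, D x -> Ddom ip phi x) ->
  quasi_basis ip phi psi D E ->
  [/\ (forall x, perp ip (lspan phi) x -> Ddom ip phi x),
      (dense_in ip (fun x => D x /\ perp ip (lspan phi) x) (perp ip (lspan phi)) ->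
         dense ip (lspan phi)),
      (forall x, perp ip (lspan psi) x -> Ddom ip psi x)
    & (dense_in ip (fun x => E x /\ perp ip (lspan psi) x) (perp ip (lspan psi)) ->
         dense ip (lspan psi))].
Proof.
move=> [ip_inner ip_complete] _ _ _ D_dense E_dense _ _ _ _ qb.
have dense_lspan (f : nat -> H) :=
  dense_of_perp_eq0 ip_inner ip_complete (subspace_lspan f).
split; try exact: Ddom_perp_lspan.
- move=> perp_dense; apply/dense_lspan/(eq0_of_dense_in ip_inner perp_dense).
  move=> v Dv v_perp; apply: (perp_dense_eq0 ip_inner E_dense).
  exact: (quasi_basis_perpl ip_inner qb Dv v_perp).
- move=> perp_dense; apply/dense_lspan/(eq0_of_dense_in ip_inner perp_dense).
  move=> v Ev v_perp; apply: (perp_dense_eq0 ip_inner D_dense).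
  exact: (quasi_basis_perpr qb Ev v_perp).
Qed.
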